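(* Let $A\in\mathbb R^{n\times n}$ be symmetric with bandwidth $b$, where $1<b<n$, and let $Q\in\mathbb R^{2n\times 2n}$ be the orthogonal matrix produced by Algorithm 2 (described in the context) applied to $A$. Then for every $1\le k<n$, the matrices $Q(1{:}k,\,k{+}1{:}n)$ and $Q(n{+}1{:}n{+}k,\,k{+}1{:}n)$ have rank at most $2b$.
   Context: A matrix has bandwidth $b$ if its $(i,j)$ entry vanishes whenever $|i-j|>b$. A Givens rotation on rows $p\ne q$ is an orthogonal matrix $G\in\mathbb R^{2n\times 2n}$ equal to the identity except in the entries $(p,p),(p,q),(q,p),(q,q)$, which form a $2\times2$ rotation $\begin{bmatrix}c&s\\-s&c\end{bmatrix}$, $c^2+s^2=1$. ''Rotate rows $p,q$ to annihilate $R(q,j)$'' means: choose such a $G$ for which $(G^{T}R)(q,j)=0$ and then update $R\leftarrow G^{T}R$, $Q\leftarrow QG$. Algorithm 2: Initialize $Q=I_{2n}$, $R=\begin{bmatrix}A\\ I_n\end{bmatrix}\in\mathbb R^{2n\times n}$. First rotate rows $1,n+1$ to annihilate $R(n+1,1)$; then for $j=2,\dots,\min\{n,b+1\}$ rotate rows $1,j$ to annihilate $R(j,1)$. Then for $i=2,\dots,n$: (a) rotate rows $n+1,n+i$ to annihilate $R(n+i,i)$; (b) for $j=i+1,\dots,\min\{n,b+i-1\}$, rotate rows $n+j,n+i$ to annihilate $R(n+i,j)$; (c) rotate rows $i,n+1$ to annihilate $R(n+1,i)$; (d) if $i<n$, for $j=i+1,\dots,\min\{n,b+i\}$ rotate rows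 $i,j$ to annihilate $R(j,i)$. On output $QR=\begin{bmatrix}A\\ I\end{bmatrix}$ with $R$ upper triangular. Notation $Q(a{:}b,c{:}d)$ denotes the submatrix with rows $a,\dots,b$ and columns $c,\dots,d$. *)

From HB Require Import structures.
From mathcomp Require Import all_boot all_order all_algebra.
Set Implicit Arguments. Unset Strict Implicit. Unset Printing Implicit Defensive.
Import Order.TTheory GRing.Theory Num.Theory.
Local Open Scope ring_scope.

(* Convention: row/column positions p, q, j below are 1-based as in the paper;
   a MathComp ordinal k : 'I_N sits at 1-based position k.+1. *)

Definition banded (R : ringType) (n b : nat) (A : 'M[R]_n) : Prop :=
  forall i j : 'I_n, ((b < i - j)%N || (b < j - i)%N) -> A i j = 0.

Definition givens (R : ringType) (N p q : nat) (c s : R) : 'M[R]_N :=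
  \matrix_(k < N, l < N)
    if ((k.+1 == p) && (l.+1 == p)) || ((k.+1 == q) && (l.+1 == q)) then c
    else if (k.+1 == p) && (l.+1 == q) then s
    else if (k.+1 == q) && (l.+1 == p) then - s
    else (k == l)%:R.

(* One step "rotate rows p,q to annihilate R(q,j)":
   (R, Q) becomes (G^T R, Q G) for some Givens rotation G on rows p,q
   with c^2 + s^2 = 1 and (G^T R)(q,j) = 0.  Any admissible choice is allowed. *)
Definition givens_step (R : ringType) (n : nat) (p q j : nat)
    (Rm : 'M[R]_(n + n, n)) (Q : 'M[R]_(n + n))
    (Rm' : 'M[R]_(n + n, n)) (Q' : 'M[R]_(n + n)) : Prop :=
  exists c s : R,
    [/\ c ^+ 2 + s ^+ 2 = 1,
        forall (k : 'I_(n + n)) (l : 'I_n), k.+1 = q -> l.+1 = j ->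
          ((givens (n + n) p q c s)^T *m Rm) k l = 0,
        Rm' = (givens (n + n) p q c s)^T *m Rm
      & Q' = Q *m givens (n + n) p q c s].

(* The ordered list of rotations (p, q, j) of Algorithm 2 (1-based). *)
Definition alg2_inner (n b i : nat) : seq (nat * nat * nat) :=
  ((n + 1, n + i, i)%N
     :: [seq (n + j, n + i, j)%N | j <- iota i.+1 (minn n (b + i - 1) - i)])
  ++ ((i, n + 1, i)%N
     :: (if (i < n)%N then [seq (i, j, i)%N | j <- iota i.+1 (minn n (b + i) - i)]
         else [::])).

Definition alg2_steps (n b : nat) : seq (nat * nat * nat) :=
  ((1, n + 1, 1)%N :: [seq (1, j, 1)%N | j <- iota 2 (minn n (b + 1) - 1)])
  ++ flatten [seq alg2_inner n b i | i <- iota 2 (n - 1)].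

Fixpoint alg2_run (R : ringType) (n : nat) (st : seq (nat * nat * nat))
    (Rm : 'M[R]_(n + n, n)) (Q : 'M[R]_(n + n))
    (Rf : 'M[R]_(n + n, n)) (Qf : 'M[R]_(n + n)) : Prop :=
  match st with
  | [::] => Rf = Rm /\ Qf = Q
  | (p, q, j) :: st' =>
      exists (Rm' : 'M[R]_(n + n, n)) (Q' : 'M[R]_(n + n)),
        givens_step p q j Rm Q Rm' Q' /\ alg2_run st' Rm' Q' Rf Qf
  end.

(* Entry of a matrix at 0-based nat indices (0 outside the range). *)
Definition mxe (R : ringType) (m n : nat) (M : 'M[R]_(m, n)) (a c : nat) : R :=
  match insub a, insub c with
  | Some i, Some j => M i j
  | _, _ => 0
  end.

(* Q(r0+1 : r0+k, k+1 : n) (1-based), i.e. a k x (n-k) block. *)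
Definition Qblock (R : ringType) (N : nat) (Q : 'M[R]_N) (r0 k n : nat)
  : 'M[R]_(k, n - k) :=
  \matrix_(i < k, j < n - k) mxe Q (r0 + i) (k + j).

From HB Require Import structures.
From mathcomp Require Import all_boot all_order all_algebra.
From mathcomp Require Import zify ring.
Set Implicit Arguments. Unset Strict Implicit. Unset Printing Implicit Defensive.
Import Order.TTheory GRing.Theory Num.Theory.
Local Open Scope ring_scope.

(* Every rotation is orthogonal, so Q R = [A; I] holds throughout the run, and following the zero
   pattern of R step by step shows that the run ends with R = [T; 0], T upper triangular of
   bandwidth 2b.  The lower half of Q R = [A; I] reads Q(n+1:2n, 1:n) T = I, so T is invertible.
   For a block X = Q(r0+1:r0+k, k+1:n) and the trailing block T22 of T, the bandwidth of T makes
   the columns j > 2b of X T22 equal to entries of [A; I] beyond the band of A (r0 = 0) or above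
   the identity (r0 = n), which vanish.  So rank X = rank (X T22) <= 2b. *)

(* For a Givens rotation on coordinates p, q: D projects onto them, J is the quarter turn. *)
Lemma rotation_mul_tr (R : comNzRingType) N (D J : 'M[R]_N) (a s : R) :
    D^T = D -> J^T = - J -> D *m D = D -> D *m J = J -> J *m D = J -> J *m J = - D ->
  (1%:M + a *: D + s *: J) *m (1%:M + a *: D + s *: J)^T
    = 1%:M + (a *+ 2 + a ^+ 2 + s ^+ 2) *: D.
Proof.
move=> trD trJ DD DJ JD JJ.
rewrite !linearD !linearZ /= trmx1 trD trJ.
rewrite !(mulmxDl, mulmxDr, mulmxN, mul1mx, mulmx1) -!scalemxAl DD DJ JD JJ.
by apply/matrixP => i j; rewrite !mxE; ring.
Qed.

Section Givens.
Variables (R : comNzRingType) (N : nat).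

Lemma givens_neq0 p q (c s : R) (k l : 'I_N) : givens N p q c s k l != 0 ->
  k = l \/ (k.+1 \in [:: p; q]) && (l.+1 \in [:: p; q]).
Proof.
rewrite mxE !inE; do ![case: ifP => /= ?]; try (by right; lia).
by have [->|_] := eqVneq k l; [left | rewrite eqxx].
Qed.

Variables (p q : 'I_N).
Hypothesis neq_pq : p != q.

Lemma givens_deltaE (c s : R) : givens N p.+1 q.+1 c s =
  1%:M + (c - 1) *: (delta_mx p p + delta_mx q q) + s *: (delta_mx p q - delta_mx q p).
Proof.
apply/matrixP => i j; rewrite !mxE !eqSS -!val_eqE /=.
move: neq_pq; rewrite -val_eqE /=; move: (i : nat) (j : nat) (p : nat) (q : nat) => a d u v uv.
by do ![case: eqP => ? /=]; rewrite ?mulr0 ?mulr1 ?addr0 ?add0r ?subr0 ?sub0r ?oppr0 //;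
  first [lia | ring].
Qed.

Lemma givens_orthogonal (c s : R) : c ^+ 2 + s ^+ 2 = 1 ->
  givens N p.+1 q.+1 c s *m (givens N p.+1 q.+1 c s)^T = 1%:M.
Proof.
have neq_qp : (q == p) = false by rewrite eq_sym (negPf neq_pq).
pose deltaE := (mulmxDl, mulmxDr, mulmxBl, mulmxBr, mulmxN, mulNmx, mul_delta_mx_cond, eqxx,
  negPf neq_pq, neq_qp, mulr0n, mulr1n, oppr0, addr0, add0r, subr0, sub0r).
move=> cs; rewrite givens_deltaE rotation_mul_tr.
- have -> : (c - 1) *+ 2 + (c - 1) ^+ 2 + s ^+ 2 = c ^+ 2 + s ^+ 2 - 1 by ring.
  by rewrite cs subrr scale0r addr0.
- by rewrite linearD /= !trmx_delta.
- by rewrite linearB /= !trmx_delta opprB.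
- by rewrite !deltaE.
- by rewrite !deltaE.
- by rewrite !deltaE addrC.
- by rewrite !deltaE opprD.
Qed.

End Givens.

Section Alg2Run.
Variables (R : comNzRingType) (n : nat).

Definition supported (Rm : 'M[R]_(n + n, n)) (S : nat -> nat -> Prop) :=
  forall (k : 'I_(n + n)) (l : 'I_n), ~ S k.+1 l.+1 -> Rm k l = 0.

(* G^T R keeps the rows outside {p, q} and mixes rows p and q; G is chosen to zero (q, j). *)
Lemma supported_givens_step p q j (Rm Rm' : 'M[R]_(n + n, n)) Q Q' (S T : nat -> nat -> Prop) :
  givens_step p q j Rm Q Rm' Q' -> supported Rm S ->
  (forall r c, (1 <= r <= n + n)%N -> (1 <= c <= n)%N -> r <> p -> r <> q ->
     S r c -> T r c) ->
  (forall r c, (1 <= r <= n + n)%N -> (1 <= c <= n)%N -> (r = p \/ r = q) ->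
     ~ (r = q /\ c = j) -> S p c \/ S q c -> T r c) ->
  supported Rm' T.
Proof.
case=> c0 [s0 [_ annihilated -> _]] suppS off_pq on_pq k l notT.
have [/andP[/eqP kq /eqP lj] | not_qj] := boolP ((k.+1 == q) && (l.+1 == j)).
  exact: annihilated.
have not_qj' : ~ (k.+1 = q /\ l.+1 = j) by case=> kq lj; rewrite kq lj !eqxx in not_qj.
have bk : (1 <= k.+1 <= n + n)%N by have := ltn_ord k; lia.
have bl : (1 <= l.+1 <= n)%N by have := ltn_ord l; lia.
have Spq m : m.+1 \in [:: p; q] -> S m.+1 l.+1 -> S p l.+1 \/ S q l.+1.
  by rewrite !inE => /orP[] /eqP ->; [left | right].
rewrite mxE; apply: big1 => m _; rewrite mxE.
have [->|/givens_neq0 gmk] := eqVneq (givens (n + n) p q c0 s0 m k) 0; first by rewrite mul0r.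
rewrite suppS ?mulr0 // => Sm; apply: notT.
have on_pq' : k.+1 \in [:: p; q] -> S p l.+1 \/ S q l.+1 -> T k.+1 l.+1.
  by rewrite !inE => /orP kpq; apply: on_pq => //; case: kpq => /eqP; tauto.
case: gmk => [mk | /andP[mpq kpq]]; last exact: on_pq' kpq (Spq m mpq Sm).
subst m; have [kpq | kpq] := boolP (k.+1 \in [:: p; q]); first exact: on_pq' kpq (Spq k kpq Sm).
by apply: off_pq => // e; rewrite e !inE eqxx ?orbT in kpq.
Qed.

Lemma givens_step_mulmx p q j (Rm Rm' : 'M[R]_(n + n, n)) Q Q' :
  givens_step p q j Rm Q Rm' Q' -> (0 < p <= n + n)%N -> (0 < q <= n + n)%N -> p != q ->
  Q' *m Rm' = Q *m Rm.
Proof.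
case=> c [s [cs _ -> ->]] hp hq.
have lp : (p.-1 < n + n)%N by lia.
have lq : (q.-1 < n + n)%N by lia.
have -> : p = (Ordinal lp).+1 by rewrite /= prednK //; lia.
have -> : q = (Ordinal lq).+1 by rewrite /= prednK //; lia.
by move=> pq; rewrite -mulmxA (mulmxA (givens _ _ _ _ _)) givens_orthogonal ?mul1mx.
Qed.

Definition hoare st (P P' : 'M[R]_(n + n, n) -> 'M[R]_(n + n) -> Prop) :=
  forall Rm Q Rf Qf, alg2_run st Rm Q Rf Qf -> P Rm Q -> P' Rf Qf.

Lemma alg2_run_cat s1 s2 (Rm Rf : 'M[R]_(n + n, n)) Q Qf : alg2_run (s1 ++ s2) Rm Q Rf Qf ->
  exists Rm' Q', alg2_run s1 Rm Q Rm' Q' /\ alg2_run s2 Rm' Q' Rf Qf.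
Proof.
elim: s1 Rm Q => [|[[p q] j] s1 IH] Rm Q /=; first by exists Rm, Q.
case=> Rm1 [Q1 [step run]]; have [Rm2 [Q2 [run1 run2]]] := IH _ _ run.
by exists Rm2, Q2; split => //; exists Rm1, Q1.
Qed.

Lemma hoare_cat s1 s2 (P P1 P2 : 'M[R]_(n + n, n) -> 'M[R]_(n + n) -> Prop) :
  hoare s1 P P1 -> hoare s2 P1 P2 -> hoare (s1 ++ s2) P P2.
Proof.
move=> h1 h2 Rm Q Rf Qf /alg2_run_cat [Rm' [Q' [run1 run2]]] HP.
exact: h2 run2 (h1 _ _ _ _ run1 HP).
Qed.

Lemma hoare_conseq s (P P0 P1 P2 : 'M[R]_(n + n, n) -> 'M[R]_(n + n) -> Prop) :
  (forall Rm Q, P Rm Q -> P0 Rm Q) -> hoare s P0 P1 ->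
  (forall Rm Q, P1 Rm Q -> P2 Rm Q) -> hoare s P P2.
Proof. by move=> h0 h h2 Rm Q Rf Qf run HP; apply/h2/(h _ _ _ _ run)/h0. Qed.

Lemma hoare_flatten_iota (f : nat -> seq (nat * nat * nat)) I a m :
  (forall t, (a <= t < a + m)%N -> hoare (f t) (I t) (I t.+1)) ->
  hoare (flatten [seq f t | t <- iota a m]) (I a) (I (a + m)%N).
Proof.
elim: m a => [|m IH] a h /=.
  by rewrite addn0 => Rm Q Rf Qf [-> ->].
apply: hoare_cat; first by apply: h; lia.
by rewrite -addSnnS; apply: IH => t ht; apply: h; lia.
Qed.

Lemma hoare_map_iota (g : nat -> nat * nat * nat) I a m :
  (forall t, (a <= t < a + m)%N -> hoare [:: g t] (I t) (I t.+1)) ->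
  hoare [seq g t | t <- iota a m] (I a) (I (a + m)%N).
Proof.
move/hoare_flatten_iota; congr hoare.
by elim: (iota a m) => //= x s ->.
Qed.

Definition alg2_inv (C : 'M[R]_(n + n, n)) (S : nat -> nat -> Prop) Rm Q :=
  supported Rm S /\ Q *m Rm = C.

Lemma alg2_inv_weaken C (S T : nat -> nat -> Prop) Rm Q :
  (forall r c, (1 <= r <= n + n)%N -> (1 <= c <= n)%N -> S r c -> T r c) ->
  alg2_inv C S Rm Q -> alg2_inv C T Rm Q.
Proof.
move=> ST [suppS QR]; split => // k l notT; apply: suppS => Skl; apply/notT/ST => //.
  by have := ltn_ord k; lia.
by have := ltn_ord l; lia.
Qed.

Lemma hoare_givens C p q j (S T : nat -> nat -> Prop) :
  (0 < p <= n + n)%N -> (0 < q <= n + n)%N -> p != q ->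
  (forall r c, (1 <= r <= n + n)%N -> (1 <= c <= n)%N -> r <> p -> r <> q ->
     S r c -> T r c) ->
  (forall r c, (1 <= r <= n + n)%N -> (1 <= c <= n)%N -> (r = p \/ r = q) ->
     ~ (r = q /\ c = j) -> S p c \/ S q c -> T r c) ->
  hoare [:: (p, q, j)] (alg2_inv C S) (alg2_inv C T).
Proof.
move=> hp hq pq off_pq on_pq Rm Q Rf Qf /= [Rm1 [Q1 [step [-> ->]]]] [suppS QR].
split; first exact: supported_givens_step step suppS off_pq on_pq.
by rewrite (givens_step_mulmx step).
Qed.

End Alg2Run.

Local Open Scope nat_scope.

(* Zero patterns of R at stage i, for 1-based row r and column c.  Rows r < i of R are final,
   supported in columns r..r+2b; rows i <= r <= n still carry the band of A, in columns >= i.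
   Row n+1 holds fill-in in columns i..i+b-1, and row n+m (m >= i) its diagonal entry and
   fill-in up to column i+b-2.  [pattern_b n b i t] and [pattern_d n b i t] describe R inside the
   loops (b) and (d), t being the next column, resp. row, to rotate. *)
Definition band_top (n b i r c : nat) : Prop :=
  (r <= n /\ r < i /\ r <= c /\ c <= r + 2 * b) \/
  (r <= n /\ i <= r /\ i <= c /\ r <= c + b /\ c <= r + b).

Definition pattern_at (n b i r c : nat) : Prop :=
  band_top n b i r c \/ (r = n + 1 /\ i <= c /\ c + 1 <= i + b) \/
  (n + 2 <= r /\ i + n <= r /\ r <= c + n /\ (c + n = r \/ c + 2 <= i + b)).

Definition pattern_mid (n b i r c : nat) : Prop :=
  band_top n b i r c \/ (r = n + 1 /\ i <= c /\ c + 1 <= i + b) \/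
  (n + 2 <= r /\ i + n < r /\ r <= c + n /\ (c + n = r \/ c + 1 <= i + b)).

Definition pattern_b (n b i t r c : nat) : Prop :=
  band_top n b i r c \/ (r = n + 1 /\ i <= c /\ c + 1 <= i + b) \/
  (r = n + i /\ t <= c /\ c + 1 <= i + b) \/
  (n + i < r /\ r < n + t /\ r <= c + n /\ c + 1 <= i + b) \/
  (n + t <= r /\ r <= c + n /\ (c + n = r \/ c + 2 <= i + b)).

Definition pattern_d (n b i t r c : nat) : Prop :=
  (r <= n /\ r < i /\ r <= c /\ c <= r + 2 * b) \/
  (r = i /\ i <= c /\ c + 1 <= t + b) \/
  (r <= n /\ i < r /\ r < t /\ i + 1 <= c /\ c <= r + b) \/
  (r <= n /\ t <= r /\ i <= c /\ r <= c + b /\ c <= r + b) \/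
  (r = n + 1 /\ i + 1 <= c /\ c <= i + b) \/
  (n + 2 <= r /\ i + n < r /\ r <= c + n /\ (c + n = r \/ c + 1 <= i + b)).

Ltac destruct_pattern :=
  repeat match goal with H : _ \/ _ |- _ => destruct H | H : _ /\ _ |- _ => destruct H end.
Ltac pick_disjunct :=
  match goal with |- _ \/ _ => first [left; lia | right; pick_disjunct] | _ => lia end.
Ltac solve_pattern :=
  move=> r c *; destruct_pattern; subst; pick_disjunct.

Section Alg2Stages.
Variables (R : comNzRingType) (n b : nat) (C : 'M[R]_(n + n, n)).
Hypothesis b_gt0 : 0 < b.

Lemma hoare_step_a i : 2 <= i <= n ->
  hoare [:: (n + 1, n + i, i)]
    (alg2_inv C (pattern_at n b i)) (alg2_inv C (pattern_b n b i i.+1)).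
Proof.
by move=> hi; apply: hoare_givens; try lia; rewrite /pattern_at /pattern_b /band_top;
  solve_pattern.
Qed.

Lemma hoare_step_b i t : 2 <= i <= n -> i < t <= n -> t + 1 <= b + i ->
  hoare [:: (n + t, n + i, t)]
    (alg2_inv C (pattern_b n b i t)) (alg2_inv C (pattern_b n b i t.+1)).
Proof.
by move=> hi ht ht'; apply: hoare_givens; try lia; rewrite /pattern_b /band_top; solve_pattern.
Qed.

Lemma hoare_step_c i : 1 <= i <= n ->
  hoare [:: (i, n + 1, i)]
    (alg2_inv C (pattern_mid n b i)) (alg2_inv C (pattern_d n b i i.+1)).
Proof.
by move=> hi; apply: hoare_givens; try lia; rewrite /pattern_mid /pattern_d /band_top;
  solve_pattern.
Qed.

Lemma hoare_step_d i t : 1 <= i <= n -> i < t <= n -> t <= b + i ->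
  hoare [:: (i, t, i)] (alg2_inv C (pattern_d n b i t)) (alg2_inv C (pattern_d n b i t.+1)).
Proof. by move=> hi ht ht'; apply: hoare_givens; try lia; rewrite /pattern_d; solve_pattern. Qed.

End Alg2Stages.

Lemma pattern_b_end n b i r c : 0 < b -> 2 <= i <= n -> 1 <= r <= n + n -> 1 <= c <= n ->
  pattern_b n b i (minn n (b + i - 1)).+1 r c -> pattern_mid n b i r c.
Proof.
by rewrite /pattern_b /pattern_mid /band_top => *; destruct_pattern; subst; pick_disjunct.
Qed.

Lemma pattern_d_end n b i r c : 0 < b -> 1 <= i <= n -> 1 <= r <= n + n -> 1 <= c <= n ->
  pattern_d n b i (minn n (b + i)).+1 r c -> pattern_at n b i.+1 r c.
Proof.
by rewrite /pattern_d /pattern_at /band_top => *; destruct_pattern; subst; pick_disjunct.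
Qed.

Lemma pattern_at1_mid n b r c : 0 < b -> 1 <= r <= n + n -> 1 <= c <= n ->
  pattern_at n b 1 r c -> pattern_mid n b 1 r c.
Proof.
by rewrite /pattern_at /pattern_mid /band_top => *; destruct_pattern; subst; pick_disjunct.
Qed.

Section Alg2Hoare.
Variables (R : comNzRingType) (n b : nat) (C : 'M[R]_(n + n, n)).
Hypothesis b_gt0 : 0 < b.

Lemma hoare_alg2_steps_cd i : 1 <= i <= n ->
  hoare ((i, n + 1, i) :: [seq (i, j, i) | j <- iota i.+1 (minn n (b + i) - i)])
    (alg2_inv C (pattern_mid n b i)) (alg2_inv C (pattern_at n b i.+1)).
Proof.
move=> hi; apply: (hoare_cat (s1 := [:: _])); first exact: hoare_step_c.
have := hoare_map_iota (g := fun j => (i, j, i)) (I := fun t => alg2_inv C (pattern_d n b i t))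
  (a := i.+1) (m := minn n (b + i) - i).
rewrite (_ : i.+1 + _ = (minn n (b + i)).+1); last by lia.
move=> h; apply: hoare_conseq (h _) _ => // [t ht | Rm Q]; first by apply: hoare_step_d; lia.
by apply: alg2_inv_weaken => r c *; apply: pattern_d_end.
Qed.

Lemma hoare_alg2_inner i : 2 <= i <= n ->
  hoare (alg2_inner n b i) (alg2_inv C (pattern_at n b i)) (alg2_inv C (pattern_at n b i.+1)).
Proof.
move=> hi; apply: (hoare_cat (P1 := alg2_inv C (pattern_mid n b i))).
  apply: (hoare_cat (s1 := [:: _])); first exact: hoare_step_a.
  have := hoare_map_iota (g := fun j => (n + j, n + i, j))
    (I := fun t => alg2_inv C (pattern_b n b i t)) (a := i.+1) (m := minn n (b + i - 1) - i).
  rewrite (_ : i.+1 + _ = (minn n (b + i - 1)).+1); last by lia.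
  move=> h; apply: hoare_conseq (h _) _ => // [t ht | Rm Q]; first by apply: hoare_step_b; lia.
  by apply: alg2_inv_weaken => r c *; apply: pattern_b_end.
rewrite (_ : (if i < n then _ else _) = [seq (i, j, i) | j <- iota i.+1 (minn n (b + i) - i)]).
  by apply: hoare_alg2_steps_cd; lia.
by case: ltnP => // ni; rewrite (_ : minn n (b + i) - i = 0) //; lia.
Qed.

Lemma hoare_alg2 : 0 < n ->
  hoare (alg2_steps n b) (alg2_inv C (pattern_at n b 1)) (alg2_inv C (pattern_at n b n.+1)).
Proof.
move=> n_gt0; apply: (hoare_cat (P1 := alg2_inv C (pattern_at n b 2))).
  apply: hoare_conseq (hoare_alg2_steps_cd (i := 1) _) _ => // Rm Q.
  by apply: alg2_inv_weaken => r c *; apply: pattern_at1_mid.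
have := hoare_flatten_iota (f := alg2_inner n b) (I := fun t => alg2_inv C (pattern_at n b t))
  (a := 2) (m := n - 1).
rewrite (_ : 2 + (n - 1) = n.+1); last by lia.
by apply=> t ht; apply: hoare_alg2_inner; lia.
Qed.

End Alg2Hoare.

Local Close Scope nat_scope.

Definition upper_band (R : nmodType) n w (T : 'M[R]_n) :=
  forall i j : 'I_n, (j < i)%N || (i + w < j)%N -> T i j = 0.

Lemma alg2_inv_init (R : comNzRingType) n b (A : 'M[R]_n) :
  (0 < b)%N -> banded b A -> alg2_inv (col_mx A 1%:M) (pattern_at n b 1) (col_mx A 1%:M) 1%:M.
Proof.
move=> b_gt0 A_band; split; last by rewrite mul1mx.
move=> k l notS; case: (splitP k) => k' ek.
  rewrite (_ : k = lshift n k'); last exact: val_inj.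
  rewrite col_mxEu; apply: A_band; apply/negP => /negP; rewrite negb_or -!leqNgt => bnd.
  by apply: notS; rewrite /pattern_at /band_top ek; have := ltn_ord k'; left; right; lia.
rewrite (_ : k = rshift n k'); last exact: val_inj.
rewrite col_mxEd mxE; case: eqVneq => // ekl; exfalso; apply: notS.
by rewrite /pattern_at /band_top ek -ekl; have := ltn_ord k'; pick_disjunct.
Qed.

Lemma alg2_inv_final (R : comNzRingType) n b C (Rf : 'M[R]_(n + n, n)) Q :
  alg2_inv C (pattern_at n b n.+1) Rf Q ->
  upper_band (2 * b) (usubmx Rf) /\ lsubmx Q *m usubmx Rf = C.
Proof.
case=> suppS <-.
have Rf_low : dsubmx Rf = 0.
  apply/matrixP => i j; rewrite !mxE; apply: suppS => /=.
  by rewrite /pattern_at /band_top => S; have := ltn_ord j; destruct_pattern; lia.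
split.
  move=> i j ij; rewrite mxE; apply: suppS => /=.
  by rewrite /pattern_at /band_top => S; have := ltn_ord i; destruct_pattern; lia.
by rewrite -{2}[Q]hsubmxK -{2}[Rf]vsubmxK mul_row_col Rf_low mulmx0 addr0.
Qed.

Section MatrixEntry.
Variable R : nzRingType.

Lemma mxe_ord m n (M : 'M[R]_(m, n)) a c (ha : (a < m)%N) (hc : (c < n)%N) :
  mxe M a c = M (Ordinal ha) (Ordinal hc).
Proof.
rewrite /mxe (insubT (fun x => (x < m)%N) ha) (insubT (fun x => (x < n)%N) hc) /=.
by congr (M _ _); apply: val_inj.
Qed.

Lemma mxeE m n (M : 'M[R]_(m, n)) (i : 'I_m) (j : 'I_n) : mxe M i j = M i j.
Proof. by rewrite (mxe_ord _ (ltn_ord i) (ltn_ord j)); congr (M _ _); apply: val_inj. Qed.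

Lemma mxe_outl m n (M : 'M[R]_(m, n)) a c : (m <= a)%N -> mxe M a c = 0.
Proof. by move=> ma; rewrite /mxe insubF // ltnNge ma. Qed.

Lemma mxe_outr m n (M : 'M[R]_(m, n)) a c : (n <= c)%N -> mxe M a c = 0.
Proof. by move=> nc; rewrite /mxe; case: insub => // i; rewrite insubF // ltnNge nc. Qed.

Lemma mxe_mulmx m n p (A : 'M[R]_(m, n)) (B : 'M[R]_(n, p)) a c :
  mxe (A *m B) a c = \sum_(k < n) mxe A a k * mxe B k c.
Proof.
have [ma | am] := leqP m a.
  by rewrite mxe_outl // big1 // => k _; rewrite mxe_outl ?mul0r.
have [pc | cp] := leqP p c.
  by rewrite mxe_outr // big1 // => k _; rewrite (mxe_outr B) ?mulr0.
rewrite (mxe_ord _ am cp) mxE; apply: eq_bigr => k _.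
rewrite (mxe_ord _ am (ltn_ord k)) (mxe_ord _ (ltn_ord k) cp).
by congr (A _ _ * B _ _); apply: val_inj.
Qed.

Lemma mxe_col_mx m1 m2 n (A : 'M[R]_(m1, n)) (B : 'M[R]_(m2, n)) a c :
  mxe (col_mx A B) a c = if (a < m1)%N then mxe A a c else mxe B (a - m1) c.
Proof.
have [ma | am] := leqP (m1 + m2) a.
  by case: ltnP => am1; rewrite !mxe_outl //; lia.
have [nc | cn] := leqP n c; first by rewrite !mxe_outr ?if_same.
rewrite (mxe_ord _ am cn); case: (splitP (Ordinal am)) => i /= ai.
  rewrite (_ : Ordinal am = lshift m2 i); last exact: val_inj.
  by rewrite col_mxEu ai -(mxeE A i (Ordinal cn)).
rewrite (_ : Ordinal am = rshift m1 i); last exact: val_inj.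
by rewrite col_mxEd ai addKn -(mxeE B i (Ordinal cn)).
Qed.

Lemma mxe_lsubmx m n1 n2 (M : 'M[R]_(m, n1 + n2)) a c : (c < n1)%N ->
  mxe (lsubmx M) a c = mxe M a c.
Proof.
move=> cn; have [ma | am] := leqP m a; first by rewrite !mxe_outl.
by rewrite (mxe_ord _ am cn) (mxe_ord _ am (ltn_addr n2 cn)) mxE; congr (M _ _); apply: val_inj.
Qed.

End MatrixEntry.

Lemma big_ord_split_at (V : nmodType) (F : nat -> V) k n : (k <= n)%N ->
  \sum_(m < n) F m = \sum_(m < k) F m + \sum_(j < n - k) F (k + j)%N.
Proof. by move=> kn; move: (n - k)%N (subnKC kn) => d <-; rewrite big_split_ord. Qed.

Section Rank.
Variable F : fieldType.

Lemma unitmx_upper_trig n (T : 'M[F]_n) : (forall i j : 'I_n, (j < i)%N -> T i j = 0) ->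
  (T \in unitmx) = [forall i, T i i != 0].
Proof.
move=> T_upper; have trig : is_trig_mx T^T by apply/is_trig_mxP => i j ij; rewrite mxE T_upper.
rewrite unitmxE unitfE -det_tr det_trig //; apply/idP/forallP => [det_neq0 i | diag_neq0].
  by apply: contraNneq det_neq0 => Tii; rewrite (bigD1 i) //= mxE Tii mul0r.
by apply/prodf_neq0 => i _; rewrite mxE.
Qed.

Lemma rank_le_of_zero_cols m n w (M : 'M[F]_(m, n)) :
  (forall i (j : 'I_n), (w <= j)%N -> M i j = 0) -> (\rank M <= w)%N.
Proof.
move=> M0; have [nw | wn] := leqP n w; first exact: leq_trans (rank_leq_col M) nw.
have -> : M = M *m pid_mx w.
  apply/matrixP => i j; rewrite mxE (bigD1 j) //= big1 ?addr0 => [|k kj]; rewrite mxE.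
    by case: ltnP => jw; rewrite eqxx /= ?mulr1 // M0 ?mul0r.
  by move: kj; rewrite -val_eqE => /negPf ->; rewrite mulr0.
by rewrite (leq_trans (mxrankM_maxr _ _)) // rank_pid_mx // ltnW.
Qed.

Lemma rank_block_le N n w r0 k (L : 'M[F]_(N, n)) (T : 'M[F]_n) :
  (k <= n)%N -> upper_band w T -> T \in unitmx ->
  (forall i j, (i < k)%N -> (w <= j)%N -> (k + j < n)%N -> mxe (L *m T) (r0 + i) (k + j) = 0) ->
  (\rank (\matrix_(i < k, j < n - k) mxe L (r0 + i) (k + j)) <= w)%N.
Proof.
move=> kn T_band T_unit LT0.
have T_mxe m c : (c < m)%N \/ (m + w < c)%N -> mxe T m c = 0.
  move=> mc; have [nm | mn] := leqP n m; first by rewrite mxe_outl.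
  have [nc | cn] := leqP n c; first by rewrite mxe_outr.
  by rewrite (mxe_ord _ mn cn); apply: T_band; apply/orP.
pose T22 : 'M_(n - k) := \matrix_(i, j) mxe T (k + i) (k + j).
have T22_unit : T22 \in unitmx.
  rewrite unitmx_upper_trig => [|i j ji]; last by rewrite mxE T_mxe // ltn_add2l; left.
  move: T_unit; rewrite unitmx_upper_trig => [/forallP T_diag | i j ji].
    apply/forallP => i; have ki : (k + i < n)%N by rewrite -ltn_subRL.
    by rewrite mxE (mxe_ord _ ki ki).
  by apply: T_band; rewrite ji.
rewrite -(mxrankMfree _ (_ : row_free T22)) ?row_free_unit //.
apply: rank_le_of_zero_cols => i j wj.
have kj : (k + j < n)%N by rewrite -ltn_subRL.
rewrite -[RHS](LT0 i j) // mxE.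
have -> : mxe (L *m T) (r0 + i) (k + j)
    = \sum_(m < n - k) mxe L (r0 + i) (k + m) * mxe T (k + m) (k + j).
  rewrite mxe_mulmx (big_ord_split_at (fun m => mxe L (r0 + i) m * mxe T m (k + j)) kn).
  rewrite big1 ?add0r // => m _.
  by rewrite (T_mxe m) ?mulr0 //; right; have := ltn_ord m; lia.
by apply: eq_bigr => m _; rewrite !mxE.
Qed.

End Rank.

Theorem theorem4p3 (R : rcfType) (n b : nat) (A : 'M[R]_n)
    (Rf : 'M[R]_(n + n, n)) (Q : 'M[R]_(n + n)) :
  (1 < b)%N -> (b < n)%N ->
  A^T = A -> banded b A ->
  alg2_run (alg2_steps n b) (col_mx A 1%:M) 1%:M Rf Q ->
  forall k : nat, (1 <= k)%N -> (k < n)%N ->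
    (\rank (Qblock Q 0 k n) <= 2 * b)%N /\
    (\rank (Qblock Q n k n) <= 2 * b)%N.
Proof.
move=> b_gt1 b_ltn _ A_band run k _ k_ltn.
have b_gt0 := ltnW b_gt1.
have [T_band QT] :=
  alg2_inv_final (hoare_alg2 b_gt0 (ltn_trans b_gt0 b_ltn) run (alg2_inv_init b_gt0 A_band)).
set T := usubmx Rf in T_band QT.
have T_unit : T \in unitmx.
  move: QT; rewrite -[lsubmx Q]vsubmxK mul_col_mx => /eq_col_mx[_].
  by case/mulmx1_unit.
have Qblock_lsubmx r0 : Qblock Q r0 k n = \matrix_(i, j) mxe (lsubmx Q) (r0 + i) (k + j).
  by apply/matrixP => i j; rewrite !mxE mxe_lsubmx // -ltn_subRL.
split; rewrite Qblock_lsubmx;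
  apply: (rank_block_le (ltnW k_ltn) T_band T_unit) => i j ik bj kjn; rewrite QT mxe_col_mx.
- have ilt : (i < n)%N by lia.
  by rewrite ilt (mxe_ord _ ilt kjn); apply: A_band => /=; apply/orP; right; lia.
- rewrite ltnNge leq_addr /= addKn (mxe_ord _ (ltn_trans ik k_ltn) kjn) mxE.
  by rewrite -val_eqE /= (_ : (i == k + j)%N = false) //; lia.
Qed.
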